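(* Let $q$ be a self-join-free Boolean conjunctive query such that $q$ is saturated and the attack graph of $q$ contains no strong cycle. Let $\mathcal{S}$ be an initial strong component in the attack graph of $q$ with $|\mathcal{S}|\ge 2$. Then the M-graph of $q$ contains a cycle all of whose atoms belong to $\mathcal{S}$.
   Context: Every relation name has a signature $[n,k]$ ($1\le k\le n$; primary-key positions $1,\dots,k$) and a mode in $\{\mathsf{c},\mathsf{i}\}$. For an atom $F$, $\mathrm{key}(F)$ = variables at primary-key positions, $\mathrm{vars}(F)$ = all its variables. A self-join-free Boolean conjunctive query is a finite set of atoms with distinct relation names. $\mathcal{K}(p)=\{\mathrm{key}(F)\to\mathrm{vars}(F)\mid F\in p\}$ (FDs over variables); $q^{\mathsf{c}}$ = atoms of $q$ of mode $\mathsf{c}$; $F^{+,q}$ = variables $x$ with $\mathcal{K}(q\setminus\{F\})\cup\mathcal{K}(q^{\mathsf{c}})\models\mathrm{key}(F)\to x$. Attack graph: vertices atoms of $q$, edge $F\to G$ ($F\ne G$) iff there are atoms $F_0=F,\dots,F_\ell=G$ of $q$ and variables $x_i\in(\mathrm{vars}(F_{i-1})\cap\mathrm{vars}(F_i))\setminus F^{+,q}$. Attack weak if $\mathcal{K}(q)\models\mathrm{key}(F)\to\mathrm{key}(G)$, else strong; cycle strong if it contains a strong attack. A strong component is initial if no edge enters it from another strong component. $F$ attacks a variable $x$ if $F$ attacks $N(x)$ in $q\cup\{N(x)\}$ ($N$ fresh, signature $[1,1]$). A sequential proof for $\mathcal{K}(q)\models Z\to w$: atoms $F_1,\dots,F_\ell$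 of $q$ with $\mathrm{key}(F_i)\subseteq Z\cup\bigcup_{j<i}\mathrm{vars}(F_j)$ and $w\in\mathrm{vars}(F_k)$ for some $k$. $Z\to w$ is internal to $q$ if some such proof has no atom attacking a variable in $Z\cup\{w\}$, and $Z\subseteq\mathrm{vars}(F)$ for some $F\in q$. $q$ is saturated if $\mathcal{K}(q^{\mathsf{c}})\models\sigma$ for every $\sigma$ internal to $q$. The M-graph of $q$ has the atoms of $q$ as vertices and an edge $F\to G$ ($F\ne G$) iff $\mathcal{K}(q^{\mathsf{c}})\models\mathrm{vars}(F)\to\mathrm{key}(G)$. *)

From HB Require Import structures.
From mathcomp Require Import all_boot.
From Stdlib Require Import Relations.

Set Implicit Arguments.
Unset Strict Implicit.
Unset Printing Implicit Defensive.

(* Variables are natural numbers.  A term is either a variable (inl x) or a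
   constant (inr c). *)
Definition term := (nat + nat)%type.

Definition term_var (t : term) : option nat :=
  match t with inl x => Some x | inr _ => None end.

(* An atom R(t_1,...,t_n) of a relation name R with signature [n,k]:
   [rel] is the relation name, [keylen] = k, [args] = (t_1,...,t_n) (so
   n = size args), [is_c] is the mode of R (true = mode c, false = mode i). *)
Record atom := mkAtom { rel : nat; keylen : nat; args : seq term; is_c : bool }.

Definition atom_code (F : atom) := (rel F, keylen F, args F, is_c F).
Definition atom_decode (p : nat * nat * seq term * bool) :=
  let: (r, k, a, m) := p in mkAtom r k a m.
Lemma atom_codeK : cancel atom_code atom_decode. Proof. by case. Qed.
HB.instance Definition _ := Equality.copy atom (can_type atom_codeK).

Definition wf_atom (F : atom) : bool := (0 < keylen F) && (keylen F <= size (args F)).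

Definition key (F : atom) : seq nat := pmap term_var (take (keylen F) (args F)).
Definition vars (F : atom) : seq nat := pmap term_var (args F).

Definition query := seq atom.
Definition sjf_query (q : query) : bool := all wf_atom q && uniq (map rel q).

Definition fd := (seq nat * seq nat)%type.

Inductive fd_derives (Sigma : seq fd) (Z : seq nat) : nat -> Prop :=
| fdd_base x : x \in Z -> fd_derives Sigma Z x
| fdd_step X Y x : (X, Y) \in Sigma ->
    (forall y, y \in X -> fd_derives Sigma Z y) -> x \in Y -> fd_derives Sigma Z x.

Definition fd_implies (Sigma : seq fd) (Z W : seq nat) : Prop :=
  forall w, w \in W -> fd_derives Sigma Z w.

Definition K (p : query) : seq fd := [seq (key F, vars F) | F <- p].

Definition qc (q : query) : query := [seq F <- q | is_c F].

Definition plus (q : query) (F : atom) (x : nat) : Prop :=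
  fd_derives (K [seq G <- q | G != F] ++ K (qc q)) (key F) x.

Inductive attack_chain (q : query) (F : atom) : atom -> Prop :=
| ach_refl : attack_chain q F F
| ach_step G H x : attack_chain q F G -> H \in q ->
    x \in vars G -> x \in vars H -> ~ plus q F x -> attack_chain q F H.

Definition attacks (q : query) (F G : atom) : Prop :=
  [/\ F \in q, G \in q, F != G & attack_chain q F G].

Definition weak_attack (q : query) (F G : atom) : Prop :=
  attacks q F G /\ fd_implies (K q) (key F) (key G).

Definition strong_attack (q : query) (F G : atom) : Prop :=
  attacks q F G /\ ~ fd_implies (K q) (key F) (key G).

Definition dummy_atom := mkAtom 0 0 [::] false.

Definition is_cycle (E : atom -> atom -> Prop) (c : seq atom) : Prop :=
  0 < size c /\
  forall i, i < size c -> E (nth dummy_atom c i) (nth dummy_atom c (i.+1 %% size c)).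

Definition has_strong_cycle (q : query) : Prop :=
  exists c, is_cycle (attacks q) c /\
    exists2 i, i < size c &
      strong_attack q (nth dummy_atom c i) (nth dummy_atom c (i.+1 %% size c)).

Definition attack_reach (q : query) : relation atom := clos_refl_trans atom (attacks q).

Definition strong_component (q : query) (S : seq atom) : Prop :=
  uniq S /\
  exists2 F0, F0 \in q &
    forall G, G \in S <-> [/\ G \in q, attack_reach q F0 G & attack_reach q G F0].

Definition initial_component (q : query) (S : seq atom) : Prop :=
  strong_component q S /\
  forall F G, F \in q -> F \notin S -> G \in S -> ~ attacks q F G.

Definition fresh_rel (q : query) : nat := (foldr maxn 0 (map rel q)).+1.

Definition Natom (q : query) (x : nat) : atom := mkAtom (fresh_rel q) 1 [:: inl x] false.

Definition attacks_var (q : query) (F : atom) (x : nat) : Prop :=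
  attacks (Natom q x :: q) F (Natom q x).

Definition sequential_proof (q : query) (Z : seq nat) (w : nat) (s : seq atom) : Prop :=
  [/\ all (mem q) s,
      forall i, i < size s ->
        {subset key (nth dummy_atom s i) <= Z ++ flatten (map vars (take i s))}
    & has (fun F => w \in vars F) s].

Definition internal (q : query) (Z : seq nat) (w : nat) : Prop :=
  (exists s, sequential_proof q Z w s /\
     forall F, F \in s -> forall x, x \in w :: Z -> ~ attacks_var q F x)
  /\ exists2 F, F \in q & {subset Z <= vars F}.

Definition saturated (q : query) : Prop :=
  forall Z w, internal q Z w -> fd_implies (K (qc q)) Z [:: w].

Definition Medge (q : query) (F G : atom) : Prop :=
  [/\ F \in q, G \in q, F != G & fd_implies (K (qc q)) (vars F) (key G)].

From Pilot Require Import Defs.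
From Stdlib Require Import Relations Classical.
From mathcomp Require Import all_boot.

Set Implicit Arguments.
Unset Strict Implicit.
Unset Printing Implicit Defensive.

(* Every atom G of S has an M-graph successor inside S; as S is finite,
   following successors eventually revisits an atom and closes a cycle.
   To find the successor, note that G attacks some z of S, and since no cycle
   is strong this attack is weak: K(q) |= key(G) -> key(z).  Replaying that
   derivation from vars(G) with the atoms outside S only, either it goes
   through or it first gets stuck on the key of some F in S other than G; in
   both cases key(F) follows from vars(G) using atoms outside S.  As S is
   initial, no atom outside S attacks a variable of G or of F, so each of these
   dependencies vars(G) -> w is internal, and saturation puts it in K(q^c). *)

Lemma fd_derives_sub (Sigma Sigma' : seq fd) Z x :
  {subset Sigma <= Sigma'} -> fd_derives Sigma Z x -> fd_derives Sigma' Z x.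
Proof.
move=> sub; elim=> [y yZ | X Y y XY _ IH yY]; first exact: fdd_base.
exact: fdd_step (sub _ XY) IH yY.
Qed.

Lemma key_sub_vars F : {subset key F <= vars F}.
Proof.
move=> x; rewrite /key /vars !mem_pmap => /mapP[y /mem_take yF ->].
exact: map_f.
Qed.

Definition outside (q : query) (S : seq atom) : query := [seq F <- q | F \notin S].

Section FreshAtom.

Variable q : query.

Lemma fresh_rel_gt H : H \in q -> Defs.rel H < fresh_rel q.
Proof.
rewrite /fresh_rel ltnS; elim: q => // G p IH.
rewrite in_cons => /orP[/eqP -> | Hp] /=; first exact: leq_maxl.
exact: leq_trans (IH Hp) (leq_maxr _ _).
Qed.

Lemma Natom_notin y : Natom q y \notin q.
Proof. by apply/negP => /fresh_rel_gt; rewrite ltnn. Qed.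

Lemma vars_Natom y : vars (Natom q y) = [:: y].
Proof. by []. Qed.

Lemma plus_Natom H y x : H \in q -> plus q H x -> plus (Natom q y :: q) H x.
Proof.
move=> Hq; apply: fd_derives_sub => p pin.
have NH : Natom q y != H by apply: contraNneq (Natom_notin y) => ->.
by rewrite /= NH /= in_cons pin orbT.
Qed.

Lemma attack_chain_in H T : H \in q -> attack_chain q H T -> T \in q.
Proof. by move=> Hq; elim. Qed.

Lemma attack_chain_Natom H y T :
  H \in q -> attack_chain (Natom q y :: q) H T ->
  attack_chain q H T \/
  [/\ T = Natom q y, ~ plus q H y & exists2 G, attack_chain q H G & y \in vars G].
Proof.
move=> Hq; elim=> [|G T' x _ IH]; first by left; constructor.
rewrite in_cons => /orP[/eqP -> | T'q] xG xT' /(contra_not (plus_Natom y Hq)) npl.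
  move: xT'; rewrite vars_Natom mem_seq1 => /eqP ex; subst x.
  by case: IH => [chG | [_ npy chG0]]; right; split => //; exists G.
case: IH => [chG | [eG npy [G0 chG0 yG0]]]; first by left; exact: ach_step chG T'q xG xT' npl.
move: xG; rewrite eG vars_Natom mem_seq1 => /eqP ex; subst x.
by left; exact: ach_step chG0 T'q yG0 xT' npy.
Qed.

Lemma attacks_var_attacks H E y :
  H \in q -> E \in q -> H != E -> y \in vars E -> attacks_var q H y -> attacks q H E.
Proof.
move=> Hq Eq HE yE [_ _ _ /(attack_chain_Natom Hq)[ch | [_ npy [G chG yG]]]].
  by move: (Natom_notin y); rewrite (attack_chain_in Hq ch).
by split => //; exact: ach_step chG Eq yG yE npy.
Qed.

End FreshAtom.

Definition known (Z : seq nat) (s : seq atom) : seq nat := Z ++ flatten (map vars s).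

Definition sequential (Z : seq nat) (s : seq atom) : Prop :=
  forall i, i < size s -> {subset key (nth dummy_atom s i) <= known Z (take i s)}.

Lemma known_catl Z s1 s2 : {subset known Z s1 <= known Z (s1 ++ s2)}.
Proof.
move=> x; rewrite /known map_cat flatten_cat !mem_cat.
by case/orP=> ->; rewrite ?orbT.
Qed.

Lemma known_catr Z s1 s2 : {subset known Z s2 <= known Z (s1 ++ s2)}.
Proof.
move=> x; rewrite /known map_cat flatten_cat !mem_cat.
by case/orP=> ->; rewrite ?orbT.
Qed.

Lemma sequential_cat Z s1 s2 :
  sequential Z s1 -> sequential Z s2 -> sequential Z (s1 ++ s2).
Proof.
move=> h1 h2 i lt; rewrite nth_cat take_cat.
case: ltnP => [lt1 | ge]; first exact: h1.
have lt2 : i - size s1 < size s2 by rewrite ltn_subLR // -size_cat.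
by move=> x /(h2 _ lt2)/known_catr.
Qed.

Lemma sequential_rcons Z s E :
  sequential Z s -> {subset key E <= known Z s} -> sequential Z (rcons s E).
Proof.
move=> hs hE i; rewrite -cats1 size_cat addn1 ltnS nth_cat take_cat.
rewrite leq_eqVlt => /orP[/eqP -> | lt]; last by rewrite lt; exact: hs.
by rewrite ltnn subnn take0 cats0.
Qed.

Lemma sequential_cover (p : query) Z (X : seq nat) :
  (forall y, y \in X ->
     exists s, [/\ sequential Z s, all (mem p) s & y \in known Z s]) ->
  exists s, [/\ sequential Z s, all (mem p) s & {subset X <= known Z s}].
Proof.
elim: X => [|y X IH] hX; first by exists [::].
have [s1 [seq1 all1 y1]] := hX y (mem_head _ _).
have [s2 [seq2 all2 X2]] := IH (fun z zX => hX z (mem_behead (s := y :: X) zX)).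
exists (s1 ++ s2); split; [exact: sequential_cat | by rewrite all_cat all1 |].
move=> z; rewrite in_cons => /orP[/eqP -> | /X2]; first exact: known_catl.
exact: known_catr.
Qed.

Lemma fd_derives_sequential (p : query) Z w :
  fd_derives (K p) Z w ->
  exists s, [/\ sequential Z s, all (mem p) s & w \in known Z s].
Proof.
elim=> [x xZ | X Y x /mapP[E Ep [-> ->]] _ IH xE].
  by exists [::]; rewrite /known cats0.
have [s [seq_s all_s keyE]] := sequential_cover IH.
exists (rcons s E); split; [exact: sequential_rcons | by rewrite all_rcons all_s andbT |].
by rewrite -cats1; apply: known_catr; rewrite /known /= cats0 mem_cat xE orbT.
Qed.

Section Cycles.

Variable E : atom -> atom -> Prop.

Definition is_walk (w : seq atom) : Prop :=
  forall i, i.+1 < size w -> E (nth dummy_atom w i) (nth dummy_atom w i.+1).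

Lemma rt1n_walk a b :
  clos_refl_trans_1n atom E a b -> exists l, is_walk (a :: l) /\ last a l = b.
Proof.
elim=> [x | x y z exy _ [l [wl ly]]]; first by exists [::].
by exists (y :: l); split => // -[|i] /= lt; [exact: exy | exact: wl].
Qed.

Lemma rt_first_step a b :
  clos_refl_trans atom E a b -> a != b -> exists2 z, E a z & clos_refl_trans atom E z b.
Proof.
move/(clos_rt_rt1n _ _ _ _); elim=> [x | x y z exy ryz _]; first by rewrite eqxx.
by exists y => //; exact: clos_rt1n_rt.
Qed.

Lemma edge_on_cycle a b :
  E a b -> clos_refl_trans_1n atom E b a ->
  exists c, is_cycle E c /\ exists2 i, i < size c &
    nth dummy_atom c i = a /\ nth dummy_atom c (i.+1 %% size c) = b.
Proof.
move=> eab /rt1n_walk[l [wl la]].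
have nth_l : nth dummy_atom (b :: l) (size l) = a.
  by rewrite -la -[size l]/((size (b :: l)).-1) nth_last.
exists (b :: l); split; last by exists (size l); rewrite //= modnn.
split => // i; rewrite /= ltnS leq_eqVlt => /orP[/eqP -> | lt].
  by rewrite modnn nth_l.
by rewrite modn_small ?ltnS //; exact: wl.
Qed.

Lemma walk_in (S : seq atom) :
  (forall G, G \in S -> exists2 F, F \in S & E G F) ->
  forall n G, G \in S -> exists w,
    [/\ size w = n.+1, nth dummy_atom w 0 = G, {subset w <= S} & is_walk w].
Proof.
move=> succ; elim=> [|n IH] G GS.
  by exists [:: G]; split => // x; rewrite mem_seq1 => /eqP ->.
have [F FS eGF] := succ G GS; have [w [sw w0 wS ww]] := IH F FS.
exists (G :: w); split => /=; [by rewrite sw | by [] | |].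
  by move=> x; rewrite in_cons => /orP[/eqP -> | /wS].
by case=> [|i] lt /=; [rewrite w0 | exact: ww].
Qed.

Lemma cycle_of_walk w :
  is_walk w -> ~~ uniq w -> exists c, is_cycle E c /\ {subset c <= w}.
Proof.
move=> ww /(uniqPn dummy_atom)[i [j [lij ljs eij]]].
exists (take (j - i) (drop i w)); split; last by move=> z /mem_take /mem_drop.
have sz : size (take (j - i) (drop i w)) = j - i.
  by rewrite size_take_min size_drop; apply/minn_idPl; rewrite leq_sub2r // ltnW.
rewrite /is_cycle sz subn_gt0; split => // k lk; rewrite nth_take // nth_drop.
have lt1 : (i + k).+1 < size w.
  by apply: leq_ltn_trans ljs; rewrite -addnS -leq_subRL ?(ltnW lij).
case: (ltnP k.+1 (j - i)) => [lk1 | ge].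
  by rewrite modn_small // nth_take // nth_drop addnS; exact: ww.
have ek : k.+1 = j - i by apply/eqP; rewrite eqn_leq lk ge.
rewrite ek modnn nth_take ?subn_gt0 // nth_drop addn0 eij.
have -> : j = (i + k).+1 by rewrite -addnS ek subnKC // ltnW.
exact: ww.
Qed.

Lemma cycle_in (S : seq atom) :
  0 < size S -> (forall G, G \in S -> exists2 F, F \in S & E G F) ->
  exists c, is_cycle E c /\ {subset c <= S}.
Proof.
move=> S0 succ.
have [w [sw _ wS ww]] := walk_in succ (size S) (mem_nth dummy_atom S0).
have [|c [cyc cw]] := cycle_of_walk ww.
  by apply/negP => /uniq_leq_size/(_ wS); rewrite sw ltnn.
by exists c; split => // z /cw /wS.
Qed.

End Cycles.

Lemma exists_other (T : eqType) (s : seq T) x :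
  uniq s -> 2 <= size s -> exists2 y, y \in s & x != y.
Proof.
case: s => [|a [|b s]] //= /andP[]; rewrite in_cons negb_or => /andP[nab _] _ _.
case: (eqVneq x a) => [-> | nxa]; last by exists a; rewrite ?mem_head.
by exists b; rewrite // !in_cons eqxx orbT.
Qed.

Lemma strong_component_sub q S : strong_component q S -> {subset S <= q}.
Proof. by case=> _ [F0 _ HS] G /HS[]. Qed.

Lemma attack_weak_on_cycle q G H :
  ~ has_strong_cycle q -> attacks q G H -> attack_reach q H G ->
  fd_implies (K q) (key G) (key H).
Proof.
move=> nsc aGH rHG; apply: NNPP => strong; apply: nsc.
have [c [cyc [i ic [ci ci1]]]] := edge_on_cycle aGH (clos_rt_rt1n _ _ _ _ rHG).
by exists c; split => //; exists i; rewrite // ci ci1.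
Qed.

Lemma component_attack_succ q S G G' :
  strong_component q S -> G \in S -> G' \in S -> G != G' ->
  exists2 z, z \in S & attacks q G z /\ attack_reach q z G.
Proof.
move=> [_ [F0 _ HS]] GS G'S.
have [_ rF0G rGF0] := (HS G).1 GS; have [_ rF0G' rG'F0] := (HS G').1 G'S.
move=> /(rt_first_step (rt_trans _ _ _ _ _ rGF0 rF0G'))[z aGz rzG'].
have rzG : attack_reach q z G := rt_trans _ _ _ _ _ (rt_trans _ _ _ _ _ rzG' rG'F0) rF0G.
exists z => //; apply/HS; split; first by case: aGz.
  exact: rt_trans _ _ _ _ _ rF0G (rt_step _ _ _ _ aGz).
exact: rt_trans _ _ _ _ _ rzG rGF0.
Qed.

Definition key_derivable_outside (q : query) (S : seq atom) (G : atom) : Prop :=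
  exists F, [/\ F \in S, F != G & fd_implies (K (outside q S)) (vars G) (key F)].

(* Replay the derivation from the larger set vars(G): an atom E of S that it
   uses is either G itself, whose variables are all available, or one whose
   key has already been derived by atoms outside S. *)
Lemma derives_outside_or_key q S G v :
  fd_derives (K q) (key G) v ->
  fd_derives (K (outside q S)) (vars G) v \/ key_derivable_outside q S G.
Proof.
elim=> [x /key_sub_vars xG | X Y x /mapP[E Eq [-> ->]] _ IH xE].
  by left; exact: fdd_base.
case: (classic (key_derivable_outside q S G)) => [|stuck]; first by right.
have keyE : fd_implies (K (outside q S)) (vars G) (key E).
  by move=> y /IH[].
left; case: (boolP (E \in S)) => ES; last first.
  by apply: fdd_step keyE xE; apply: map_f; rewrite mem_filter ES.
case: (eqVneq E G) => [<- | nEG]; first exact: fdd_base.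
by case: stuck; exists E.
Qed.

Lemma key_derived_outside q S G z :
  z \in S -> z != G -> fd_implies (K q) (key G) (key z) ->
  key_derivable_outside q S G.
Proof.
move=> zS nzG wk.
case: (classic (key_derivable_outside q S G)) => // stuck.
by exists z; split => // u /wk /(derives_outside_or_key S)[].
Qed.

Lemma initial_no_attack_var q S E F x :
  initial_component q S -> E \in q -> E \notin S -> F \in S -> x \in vars F ->
  ~ attacks_var q E x.
Proof.
move=> [sc init] Eq ES FS xF.
have nEF : E != F by apply: contraNneq ES => ->.
by move/(attacks_var_attacks Eq (strong_component_sub sc FS) nEF xF); apply: init.
Qed.

Lemma internal_outside q S G F w :
  initial_component q S -> G \in S -> F \in S -> w \in key F -> w \notin vars G ->
  fd_derives (K (outside q S)) (vars G) w -> internal q (vars G) w.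
Proof.
move=> ini GS FS wF wG /fd_derives_sequential[s [seq_s all_s ws]].
have sout E : E \in s -> E \in q /\ E \notin S.
  by move/(allP all_s); rewrite /= mem_filter => /andP[].
split; last by exists G; [exact: strong_component_sub ini.1 _ GS |].
exists s; split.
  split=> //; first by apply/allP => E /sout[].
  move: ws; rewrite /known mem_cat (negbTE wG) => /flatten_mapP[E Es wE].
  by apply/hasP; exists E.
move=> E /sout[Eq ES] x; rewrite in_cons => /orP[/eqP -> | xG].
  exact: initial_no_attack_var ini Eq ES FS (key_sub_vars wF).
exact: initial_no_attack_var ini Eq ES GS xG.
Qed.

Lemma Medge_successor q S G :
  saturated q -> ~ has_strong_cycle q -> initial_component q S -> 2 <= size S ->
  G \in S -> exists2 F, F \in S & Medge q G F.
Proof.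
move=> sat nsc ini sz GS; have [sc _] := ini; have Sq := strong_component_sub sc.
have [G' G'S nGG'] := exists_other G sc.1 sz.
have [z zS [aGz rzG]] := component_attack_succ sc GS G'S nGG'.
have nzG : z != G by rewrite eq_sym; case: aGz.
have [F [FS nFG keyF]] :=
  key_derived_outside zS nzG (attack_weak_on_cycle nsc aGz rzG).
exists F => //; split; [exact: Sq | exact: Sq | by rewrite eq_sym | move=> w wF].
case: (boolP (w \in vars G)) => wG; first exact: fdd_base.
exact: sat _ _ (internal_outside ini GS FS wF wG (keyF w wF)) w (mem_head _ _).
Qed.

Theorem lemma11 (q : query) (S : seq atom) :
  sjf_query q ->
  saturated q ->
  ~ has_strong_cycle q ->
  initial_component q S ->
  2 <= size S ->
  exists c : seq atom, is_cycle (Medge q) c /\ {subset c <= S}.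
Proof.
move=> _ sat nsc ini sz.
apply: cycle_in; first exact: leq_trans sz.
by move=> G; exact: Medge_successor.
Qed.
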